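(* Let $(\mathcal{J}_g)_{g\in[G]}$ be subsets of $[p]$ with $\bigcup_g\mathcal{J}_g=[p]$, $p_g=|\mathcal{J}_g|$, and suppose there is a constant $C_1>0$ with $\max_{j\in[p]}|\{g:j\in\mathcal{J}_g\}|\le C_1$. Let $A=\delta vu^\top\in\mathbb{R}^{p\times(n-1)}$ with $\delta>0$, $v\in\mathbb{R}^p$, $u\in\mathbb{R}^{n-1}$, $\|v\|_2=\|u\|_2=1$ and $\sum_{g:v_{\mathcal{J}_g}\ne0}p_g\le k$. Suppose $T\in\mathbb{R}^{p\times(n-1)}$ satisfies $\|T-A\|_{\mathrm{grp}*}\le\lambda$ for some $\lambda>0$, and let $\mathcal{S}=\{M\in\mathbb{R}^{p\times(n-1)}:\|M\|_{\mathrm F}\le1\}$. Then for any $\hat M\in\operatorname*{argmax}_{M\in\mathcal{S}}\{\langle T,M\rangle-\lambda\|M\|_{\mathrm{grp}}\}$, \[ \|vu^\top-\hat M\|_{\mathrm F}\le\frac{4\lambda(C_1nk)^{1/2}}{\delta}, \] and, letting $\hat v,\hat u$ be leading left and right singular vectors of $\hat M$, \[ \max\{\sin\angle(v,\hat v),\sin\angle(u,\hat u)\}\le\frac{8\lambda(C_1nk)^{1/2}}{\delta}. \]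
   Context: $\|M\|_{\mathrm{grp}}=\sum_{g=1}^Gp_g^{1/2}\sum_{t}\|M_{\mathcal{J}_g,t}\|_2$ and $\|R\|_{\mathrm{grp}*}=\max_{g}\max_{t}p_g^{-1/2}\|R_{\mathcal{J}_g,t}\|_2$, where $M_{\mathcal{J}_g,t}$ is the vector of entries of the $t$th column of $M$ with rows in $\mathcal{J}_g$; $\langle A,B\rangle=\mathrm{tr}(A^\top B)$; $\sin\angle(a,b)=\sqrt{1-(a^\top b)^2}$ for unit vectors $a,b$. *)

From mathcomp Require Import all_boot all_order all_algebra.
From mathcomp Require Import reals.
Set Implicit Arguments. Unset Strict Implicit. Unset Printing Implicit Defensive.
Import Order.TTheory GRing.Theory Num.Theory.
Local Open Scope ring_scope.

Section Defs.
Variable R : realType.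

Definition frob (m n : nat) (M : 'M[R]_(m, n)) : R :=
  Num.sqrt (\sum_i \sum_j M i j ^+ 2).

Definition vnorm (m : nat) (x : 'cV[R]_m) : R := Num.sqrt (\sum_i x i ord0 ^+ 2).

Definition minner (m n : nat) (A B : 'M[R]_(m, n)) : R := \tr (A^T *m B).

Definition blocknorm (m n : nat) (J : {set 'I_m}) (M : 'M[R]_(m, n)) (t : 'I_n) : R :=
  Num.sqrt (\sum_(j in J) M j t ^+ 2).

Definition grpnorm (G m n : nat) (J : 'I_G -> {set 'I_m}) (M : 'M[R]_(m, n)) : R :=
  \sum_(g < G) Num.sqrt (#|J g|%:R) * \sum_(t < n) blocknorm (J g) M t.

Definition grpdual (G m n : nat) (J : 'I_G -> {set 'I_m}) (M : 'M[R]_(m, n)) : R :=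
  \big[Num.max/0]_(g < G) \big[Num.max/0]_(t < n)
     ((Num.sqrt (#|J g|%:R))^-1 * blocknorm (J g) M t).

Definition sin_angle (m : nat) (a b : 'cV[R]_m) : R :=
  Num.sqrt (1 - ((a^T *m b) ord0 ord0) ^+ 2).

Definition singular_triple (m n : nat) (M : 'M[R]_(m, n)) (s : R)
    (x : 'cV[R]_m) (y : 'cV[R]_n) : Prop :=
  [/\ 0 <= s, vnorm x = 1, vnorm y = 1, M *m y = s *: x & M^T *m x = s *: y].

Definition leading_singular_vectors (m n : nat) (M : 'M[R]_(m, n))
    (x : 'cV[R]_m) (y : 'cV[R]_n) : Prop :=
  exists s, singular_triple M s x y /\
    forall s' x' y', singular_triple M s' x' y' -> s' <= s.

End Defs.

(* Write M0 = v u^T and D = M0 - Mhat.  Comparing the objective at Mhat with its value at the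
   feasible point M0 and splitting T = delta M0 + E, where |<E, D>| <= lambda ||D||_grp by
   duality, gives delta <M0, D> <= lambda (||D||_grp + ||M0||_grp - ||Mhat||_grp).  Since M0
   vanishes on the groups missing the support of v, the right-hand side is at most 2 lambda
   times the group norm of D restricted to the k-sparse groups, which Cauchy-Schwarz bounds
   by 2 lambda (C1 (n-1) k)^(1/2) ||D||_F.  Finally ||D||_F^2 <= 2 <M0, D> because
   ||Mhat||_F <= 1 = ||M0||_F.
   For the angles, the leading singular value s of Mhat is at least <v, Mhat u> >= 1 - ||D||_F
   (a maximiser of |Mhat y| on the compact unit ball is a singular vector), while
   D uhat = <u, uhat> v - s vhat has norm at least s sin(v, vhat), and symmetrically for D^T vhat. *)

From mathcomp Require Import all_boot all_order all_algebra.
From mathcomp Require Import reals.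
From mathcomp Require Import boolp classical_sets topology normedtype derive.
From mathcomp Require Import ring lra.
Set Implicit Arguments. Unset Strict Implicit. Unset Printing Implicit Defensive.
Import Order.TTheory GRing.Theory Num.Theory.
Import numFieldNormedType.Exports.
Local Open Scope ring_scope.

Section SumInequalities.
Variable R : realFieldType.
Implicit Types (I : finType).

Lemma sumr_sqr_ge0 I (P : pred I) (a : I -> R) : 0 <= \sum_(i | P i) a i ^+ 2.
Proof. by apply: sumr_ge0 => i _; exact: sqr_ge0. Qed.

Lemma cauchy_schwarz_sum I (P : pred I) (a b : I -> R) :
  (\sum_(i | P i) a i * b i) ^+ 2 <=
  (\sum_(i | P i) a i ^+ 2) * (\sum_(i | P i) b i ^+ 2).
Proof.
set A := \sum_(i | P i) a i ^+ 2; set B := \sum_(i | P i) b i ^+ 2.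
set C := \sum_(i | P i) a i * b i.
pose L := \sum_(i | P i) \sum_(j | P j) (a i * b j - a j * b i) ^+ 2.
have expandL : L = \sum_(i | P i) \sum_(j | P j) (a i ^+ 2 * b j ^+ 2)
    + \sum_(i | P i) \sum_(j | P j) (a j ^+ 2 * b i ^+ 2)
    - 2 * \sum_(i | P i) \sum_(j | P j) (a i * b i * (a j * b j)).
  rewrite mulr_sumr -big_split -sumrB /=; apply: eq_bigr => i _.
  rewrite mulr_sumr -big_split -sumrB /=; apply: eq_bigr => j _.
  ring.
have lagrange : L = 2 * (A * B - C ^+ 2).
  have AB : A * B = \sum_(i | P i) \sum_(j | P j) (a i ^+ 2 * b j ^+ 2).
    by rewrite mulr_suml; apply: eq_bigr => i _; rewrite mulr_sumr.
  have CC : C ^+ 2 = \sum_(i | P i) \sum_(j | P j) (a i * b i * (a j * b j)).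
    by rewrite expr2 mulr_suml; apply: eq_bigr => i _; rewrite mulr_sumr.
  rewrite expandL [X in _ + X - _]exchange_big /= AB CC; ring.
have : 0 <= L by do 2!(apply: sumr_ge0 => ? _); exact: sqr_ge0.
by rewrite lagrange pmulr_rge0 // subr_ge0.
Qed.

Lemma sum_sqr_le_card n (x : 'I_n -> R) : (\sum_i x i) ^+ 2 <= n%:R * \sum_i x i ^+ 2.
Proof.
have := cauchy_schwarz_sum predT (fun=> 1) x.
under eq_bigr do rewrite mul1r.
by under [X in _ <= X * _]eq_bigr do rewrite expr1n; rewrite sumr_const card_ord.
Qed.

End SumInequalities.

Section SqrtSumInequalities.
Variable R : rcfType.
Implicit Types (I : finType).

Lemma cauchy_schwarz_sum_sqrt I (P : pred I) (a b : I -> R) :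
  \sum_(i | P i) a i * b i <=
  Num.sqrt (\sum_(i | P i) a i ^+ 2) * Num.sqrt (\sum_(i | P i) b i ^+ 2).
Proof.
rewrite -sqrtrM ?sumr_sqr_ge0 //; apply: le_trans (ler_norm _) _.
by rewrite -sqrtr_sqr ler_sqrt ?cauchy_schwarz_sum // mulr_ge0 ?sumr_sqr_ge0.
Qed.

Lemma minkowski_sum_sqrt I (P : pred I) (a b : I -> R) :
  Num.sqrt (\sum_(i | P i) (a i + b i) ^+ 2) <=
  Num.sqrt (\sum_(i | P i) a i ^+ 2) + Num.sqrt (\sum_(i | P i) b i ^+ 2).
Proof.
have sum_ge0 := addr_ge0 (sqrtr_ge0 (\sum_(i | P i) a i ^+ 2))
                         (sqrtr_ge0 (\sum_(i | P i) b i ^+ 2)).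
rewrite -(ger0_norm sum_ge0) -sqrtr_sqr ler_sqrt ?sqr_ge0 //.
rewrite sqrrD !sqr_sqrtr ?sumr_sqr_ge0 //.
have -> : \sum_(i | P i) (a i + b i) ^+ 2 = \sum_(i | P i) a i ^+ 2
    + 2 * \sum_(i | P i) a i * b i + \sum_(i | P i) b i ^+ 2.
  rewrite mulr_sumr -!big_split /=; apply: eq_bigr => i _; ring.
have := cauchy_schwarz_sum_sqrt P a b; rewrite -mulr_natl; lra.
Qed.

End SqrtSumInequalities.

Section Frobenius.
Variable R : realType.
Implicit Types (m n q : nat).

Lemma minnerE m n (A B : 'M[R]_(m, n)) : minner A B = \sum_i \sum_j A i j * B i j.
Proof.
rewrite /minner /mxtrace exchange_big /=; apply: eq_bigr => j _.
by rewrite mxE; apply: eq_bigr => i _; rewrite mxE.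
Qed.

Lemma minnerC m n (A B : 'M[R]_(m, n)) : minner A B = minner B A.
Proof. by rewrite /minner -mxtrace_tr trmx_mul trmxK. Qed.

Lemma minnerDr m n (A B C : 'M[R]_(m, n)) : minner A (B + C) = minner A B + minner A C.
Proof. by rewrite /minner mulmxDr mxtraceD. Qed.

Lemma minnerZr m n a (A B : 'M[R]_(m, n)) : minner A (a *: B) = a * minner A B.
Proof. by rewrite /minner -scalemxAr mxtraceZ. Qed.

Lemma minnerBr m n (A B C : 'M[R]_(m, n)) : minner A (B - C) = minner A B - minner A C.
Proof. by rewrite minnerDr -scaleN1r minnerZr mulN1r. Qed.

Lemma minnerDl m n (A B C : 'M[R]_(m, n)) : minner (A + B) C = minner A C + minner B C.
Proof. by rewrite minnerC minnerDr !(minnerC C). Qed.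

Lemma minnerZl m n a (A B : 'M[R]_(m, n)) : minner (a *: A) B = a * minner A B.
Proof. by rewrite minnerC minnerZr minnerC. Qed.

Lemma minnerBl m n (A B C : 'M[R]_(m, n)) : minner (A - B) C = minner A C - minner B C.
Proof. by rewrite minnerC minnerBr !(minnerC C). Qed.

Lemma minner_mulmxl m n q (A : 'M[R]_(m, n)) (B : 'M[R]_(n, q)) C :
  minner (A *m B) C = minner B (A^T *m C).
Proof. by rewrite /minner trmx_mul mulmxA. Qed.

Lemma frob_sqr m n (A : 'M[R]_(m, n)) : frob A ^+ 2 = minner A A.
Proof.
rewrite sqr_sqrtr; last by apply: sumr_ge0 => i _; exact: sumr_sqr_ge0.
by rewrite minnerE; apply: eq_bigr => i _; apply: eq_bigr => j _; rewrite expr2.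
Qed.

Lemma frob0 m n : frob (0 : 'M[R]_(m, n)) = 0.
Proof. by rewrite /frob big1 ?sqrtr0 // => i _; rewrite big1 // => j _; rewrite mxE expr0n. Qed.

Lemma frob_ge0 m n (A : 'M[R]_(m, n)) : 0 <= frob A.
Proof. exact: sqrtr_ge0. Qed.

Lemma frob_eq0 m n (A : 'M[R]_(m, n)) : frob A = 0 -> A = 0.
Proof.
move/eqP; rewrite sqrtr_eq0 => sum_le0; apply/matrixP => i j; rewrite mxE.
have /eqP : \sum_i \sum_j A i j ^+ 2 = 0.
  by apply/eqP; rewrite eq_le sum_le0; apply: sumr_ge0 => ? _; exact: sumr_sqr_ge0.
rewrite psumr_eq0 => [/allP/(_ i (mem_index_enum _))|i' _]; last exact: sumr_sqr_ge0.
rewrite psumr_eq0 => [/allP/(_ j (mem_index_enum _))|j' _]; last exact: sqr_ge0.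
by rewrite sqrf_eq0 => /eqP.
Qed.

Lemma frob_tr m n (A : 'M[R]_(m, n)) : frob A^T = frob A.
Proof.
rewrite /frob exchange_big /=; congr Num.sqrt.
by apply: eq_bigr => i _; apply: eq_bigr => j _; rewrite mxE.
Qed.

Lemma frobZ m n a (A : 'M[R]_(m, n)) : frob (a *: A) = `|a| * frob A.
Proof.
rewrite -[LHS]ger0_norm ?frob_ge0 // -sqrtr_sqr frob_sqr minnerZl minnerZr.
by rewrite mulrA -expr2 -frob_sqr -exprMn sqrtr_sqr normrM (ger0_norm (frob_ge0 A)).
Qed.

Lemma minner_le_frob m n (A B : 'M[R]_(m, n)) : minner A B <= frob A * frob B.
Proof.
rewrite minnerE pair_bigA /= /frob !pair_bigA /=.
exact: (cauchy_schwarz_sum_sqrt predT (fun ij => A ij.1 ij.2) (fun ij => B ij.1 ij.2)).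
Qed.

Lemma frob_mulmx_le m n q (A : 'M[R]_(m, n)) (B : 'M[R]_(n, q)) :
  frob (A *m B) <= frob A * frob B.
Proof.
rewrite -sqrtrM; last by apply: sumr_ge0 => i _; exact: sumr_sqr_ge0.
rewrite ler_sqrt; last by rewrite mulr_ge0 //; apply: sumr_ge0 => i _; exact: sumr_sqr_ge0.
rewrite mulr_suml; apply: ler_sum => i _.
rewrite [X in _ * X]exchange_big mulr_sumr; apply: ler_sum => k _ /=; rewrite mxE.
exact: (cauchy_schwarz_sum predT (fun j => A i j) (fun j => B j k)).
Qed.

Lemma vnorm_frob m (x : 'cV[R]_m) : vnorm x = frob x.
Proof. by rewrite /frob; congr Num.sqrt; apply: eq_bigr => i _; rewrite big_ord1. Qed.

Lemma trmx_mul_cV m (x y : 'cV[R]_m) : x^T *m y = (minner x y)%:M.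
Proof. by rewrite [LHS]mx11_scalar /minner trace_mx11. Qed.

Lemma sin_angleE m (a b : 'cV[R]_m) : sin_angle a b = Num.sqrt (1 - minner a b ^+ 2).
Proof. by rewrite /sin_angle trmx_mul_cV mxE eqxx mulr1n. Qed.

Lemma rank1_mulmx m n (v : 'cV[R]_m) (u y : 'cV[R]_n) :
  v *m u^T *m y = minner u y *: v.
Proof. by rewrite -mulmxA trmx_mul_cV mul_mx_scalar. Qed.

Lemma trmx_rank1_mulmx m n (v x : 'cV[R]_m) (u : 'cV[R]_n) :
  (v *m u^T)^T *m x = minner v x *: u.
Proof. by rewrite trmx_mul trmxK rank1_mulmx. Qed.

Lemma rank1E m n (v : 'cV[R]_m) (u : 'cV[R]_n) i j : (v *m u^T) i j = v i 0 * u j 0.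
Proof. by rewrite mxE big_ord1 mxE. Qed.

Lemma frob_rank1 m n (v : 'cV[R]_m) (u : 'cV[R]_n) : frob (v *m u^T) = frob v * frob u.
Proof.
rewrite -[LHS]ger0_norm ?frob_ge0 // -sqrtr_sqr frob_sqr.
have -> : minner (v *m u^T) (v *m u^T) = minner v v * minner u u.
  by rewrite /minner mulmxA trmx_rank1_mulmx -scalemxAl mxtraceZ mxtrace_mulC.
by rewrite -!frob_sqr -exprMn sqrtr_sqr ger0_norm // mulr_ge0 ?frob_ge0.
Qed.

End Frobenius.

Section GroupNorms.
Variables (R : realType) (p q G : nat) (J : 'I_G -> {set 'I_p}).
Implicit Types (M D E : 'M[R]_(p, q)) (S : pred 'I_G).

Definition grpnorm_on S M :=
  \sum_(g | S g) Num.sqrt (#|J g|%:R) * \sum_t blocknorm (J g) M t.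

Lemma blocknorm_ge0 (I : {set 'I_p}) M t : 0 <= blocknorm I M t.
Proof. exact: sqrtr_ge0. Qed.

Lemma grpnorm_ge0 M : 0 <= grpnorm J M.
Proof.
apply: sumr_ge0 => g _; apply: mulr_ge0; first exact: sqrtr_ge0.
by apply: sumr_ge0 => t _; exact: blocknorm_ge0.
Qed.

Lemma blocknorm_sqr (I : {set 'I_p}) M t :
  blocknorm I M t ^+ 2 = \sum_(j in I) M j t ^+ 2.
Proof. by rewrite sqr_sqrtr ?sumr_sqr_ge0. Qed.

Lemma blocknormD (I : {set 'I_p}) M M' t :
  blocknorm I (M + M') t <= blocknorm I M t + blocknorm I M' t.
Proof.
rewrite /blocknorm; under eq_bigr do rewrite mxE.
exact: minkowski_sum_sqrt.
Qed.

Lemma grpdual_ge0 E : 0 <= grpdual J E.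
Proof. exact: bigmax_ge_id. Qed.

Lemma blocknorm_le_grpdual E g t :
  blocknorm (J g) E t <= grpdual J E * Num.sqrt (#|J g|%:R).
Proof.
have [/cards0_eq Jg0|Jg_gt0] := posnP #|J g|.
  by rewrite /blocknorm Jg0 big_set0 sqrtr0 cards0 sqrtr0 mulr0.
have sqrt_gt0 : 0 < Num.sqrt (#|J g|%:R : R) by rewrite sqrtr_gt0 ltr0n.
rewrite -ler_pdivrMr // mulrC.
apply: le_trans (le_bigmax _ _ g).
exact: le_bigmax (fun t => (Num.sqrt (#|J g|%:R))^-1 * blocknorm (J g) E t) t.
Qed.

Lemma sum_groups_mult (f : 'I_p -> R) :
  \sum_g \sum_(j in J g) f j = \sum_j #|[set g | j \in J g]|%:R * f j.
Proof.
under eq_bigr do rewrite big_mkcond.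
rewrite exchange_big /=; apply: eq_bigr => j _.
rewrite -big_mkcond /= mulr_natl -sumr_const.
by apply: eq_bigl => g; rewrite inE.
Qed.

Lemma sum_le_sum_groups (f : 'I_p -> R) :
  (forall j, exists g, j \in J g) -> (forall j, 0 <= f j) ->
  \sum_j f j <= \sum_g \sum_(j in J g) f j.
Proof.
move=> cover f_ge0; rewrite sum_groups_mult; apply: ler_sum => j _.
rewrite ler_peMl // ler1n; apply/card_gt0P.
by have [g jg] := cover j; exists g; rewrite inE.
Qed.

Lemma normr_minner_le_grp E D :
  (forall j, exists g, j \in J g) ->
  `|minner E D| <= grpdual J E * grpnorm J D.
Proof.
move=> cover; rewrite minnerE exchange_big /=.
apply: le_trans (ler_norm_sum _ _ _) _.
rewrite /grpnorm mulr_sumr.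
under [X in _ <= X]eq_bigr do rewrite mulrA mulr_sumr.
rewrite [X in _ <= X]exchange_big /=; apply: ler_sum => t _.
apply: le_trans (ler_norm_sum _ _ _) _.
under [X in X <= _]eq_bigr do rewrite normrM.
apply: le_trans (sum_le_sum_groups cover _) _ => [j|]; first exact: mulr_ge0.
apply: ler_sum => g _.
apply: le_trans (cauchy_schwarz_sum_sqrt _ _ _) _.
have normK (x : R) : `|x| ^+ 2 = x ^+ 2 by rewrite real_normK ?num_real.
under eq_bigr do rewrite normK; under [X in _ * Num.sqrt X]eq_bigr do rewrite normK.
apply: ler_wpM2r; first exact: blocknorm_ge0.
exact: blocknorm_le_grpdual.
Qed.

Lemma grpnorm_sub_le_on S M0 M :
  (forall g, ~~ S g -> forall j t, j \in J g -> M0 j t = 0) ->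
  grpnorm J (M0 - M) + grpnorm J M0 - grpnorm J M <= 2 * grpnorm_on S (M0 - M).
Proof.
move=> M0_supp; rewrite /grpnorm /grpnorm_on -big_split -sumrB /= mulr_sumr.
rewrite [X in _ <= X]big_mkcond /=; apply: ler_sum => g _.
have sqrt_ge0 : 0 <= Num.sqrt (#|J g|%:R : R) by exact: sqrtr_ge0.
case: ifPn => [_|/M0_supp M0g0].
  rewrite -mulrDr -mulrBr mulrCA ler_wpM2l //.
  suff : \sum_t blocknorm (J g) M0 t <=
         \sum_t blocknorm (J g) (M0 - M) t + \sum_t blocknorm (J g) M t by lra.
  rewrite -big_split; apply: ler_sum => t _ /=.
  by rewrite -{1}[M0](subrK M); exact: blocknormD.
have block_M0 t : blocknorm (J g) M0 t = 0.
  by rewrite /blocknorm big1 ?sqrtr0 // => j jg; rewrite M0g0 // expr0n.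
have block_D t : blocknorm (J g) (M0 - M) t = blocknorm (J g) M t.
  rewrite /blocknorm; congr Num.sqrt; apply: eq_bigr => j jg.
  by rewrite !mxE M0g0 // sub0r sqrrN.
under eq_bigr do rewrite block_D.
under [X in _ + _ * X - _]eq_bigr do rewrite block_M0.
by rewrite big1_eq mulr0 addr0 subrr.
Qed.

Lemma sum_sqr_blocknorm_le C1 M :
  (forall j, (#|[set g | j \in J g]|%:R : R) <= C1) ->
  \sum_g \sum_t blocknorm (J g) M t ^+ 2 <= C1 * frob M ^+ 2.
Proof.
move=> mult_le; under eq_bigr do (under eq_bigr do rewrite blocknorm_sqr; rewrite exchange_big).
rewrite sum_groups_mult frob_sqr minnerE mulr_sumr; apply: ler_sum => j _.
rewrite -[X in _ <= _ * X]/(\sum_t M j t * M j t).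
under [X in _ <= _ * X]eq_bigr do rewrite -expr2.
by apply: ler_wpM2r => //; exact: sumr_sqr_ge0.
Qed.

Lemma grpnorm_on_le_frob S C1 k M :
  0 <= C1 -> (forall j, (#|[set g | j \in J g]|%:R : R) <= C1) ->
  (\sum_(g | S g) #|J g| <= k)%N ->
  grpnorm_on S M <= Num.sqrt (C1 * q%:R * k%:R) * frob M.
Proof.
move=> C1_ge0 mult_le size_le; apply: le_trans (cauchy_schwarz_sum_sqrt _ _ _) _.
have sizes : \sum_(g | S g) Num.sqrt (#|J g|%:R : R) ^+ 2 <= k%:R.
  under eq_bigr do rewrite sqr_sqrtr ?ler0n //.
  by rewrite -natr_sum ler_nat.
have blocks : \sum_(g | S g) (\sum_t blocknorm (J g) M t) ^+ 2 <= q%:R * (C1 * frob M ^+ 2).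
  apply: le_trans (_ : _ <= \sum_(g | S g) q%:R * \sum_t blocknorm (J g) M t ^+ 2) _.
    by apply: ler_sum => g _; exact: sum_sqr_le_card.
  rewrite -mulr_sumr ler_wpM2l // (le_trans _ (sum_sqr_blocknorm_le M mult_le)) //.
  rewrite [X in _ <= X](bigID S) /= lerDl.
  by apply: sumr_ge0 => g _; exact: sumr_sqr_ge0.
have K_ge0 : 0 <= C1 * q%:R * k%:R by apply: mulr_ge0; [apply: mulr_ge0|]; rewrite ?ler0n.
rewrite -sqrtrM ?sumr_sqr_ge0 // -[X in _ <= X]ger0_norm ?mulr_ge0 ?sqrtr_ge0 ?frob_ge0 //.
rewrite -sqrtr_sqr ler_sqrt ?sqr_ge0 // exprMn sqr_sqrtr //.
rewrite [X in _ <= X](_ : _ = k%:R * (q%:R * (C1 * frob M ^+ 2))); last by ring.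
by apply: ler_pM sizes blocks; exact: sumr_sqr_ge0.
Qed.

End GroupNorms.

Lemma frob_sub_le_of_objective_le (R : realType) p q G k (J : 'I_G -> {set 'I_p})
    (S : pred 'I_G) (C1 delta lambda : R) (M0 T Mh : 'M[R]_(p, q)) :
  (forall j, exists g, j \in J g) -> 0 <= C1 ->
  (forall j, (#|[set g | j \in J g]|%:R : R) <= C1) ->
  (\sum_(g | S g) #|J g| <= k)%N ->
  (forall g, ~~ S g -> forall j t, j \in J g -> M0 j t = 0) ->
  0 < delta -> grpdual J (T - delta *: M0) <= lambda ->
  frob M0 = 1 -> frob Mh <= 1 ->
  minner T M0 - lambda * grpnorm J M0 <= minner T Mh - lambda * grpnorm J Mh ->
  frob (M0 - Mh) <= 4 * lambda * Num.sqrt (C1 * q%:R * k%:R) / delta.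
Proof.
move=> cover C1_ge0 mult_le size_le M0_supp delta_gt0 dual_le M0_1 Mh_le1 obj_le.
set D := M0 - Mh; set E := T - delta *: M0; set K := Num.sqrt _; set F := frob D.
have lambda_ge0 : 0 <= lambda := le_trans (grpdual_ge0 _ _) dual_le.
have F_ge0 : 0 <= F := frob_ge0 D.
have curvature : F ^+ 2 <= 2 * minner M0 D.
  have : minner Mh Mh <= minner M0 M0.
    by rewrite -!frob_sqr M0_1 expr1n -(expr1n _ 2) ler_pXn2r ?nnegrE ?frob_ge0.
  by rewrite /F frob_sqr /D !minnerBl !minnerBr (minnerC Mh M0); lra.
have noise : - minner E D <= lambda * grpnorm J D.
  apply: le_trans (ler_norm _) _; rewrite normrN.
  apply: le_trans (normr_minner_le_grp _ _ cover) _.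
  by rewrite ler_wpM2r ?grpnorm_ge0.
have basic : delta * minner M0 D <= lambda * (grpnorm J D + grpnorm J M0 - grpnorm J Mh).
  have : minner T M0 - minner T Mh = minner E D + delta * minner M0 D.
    by rewrite -minnerBr -minnerZl -minnerDl subrK.
  lra.
have support : grpnorm J D + grpnorm J M0 - grpnorm J Mh <= 2 * (K * F).
  apply: le_trans (grpnorm_sub_le_on Mh M0_supp) _.
  by rewrite ler_pM2l // grpnorm_on_le_frob.
have : delta * F ^+ 2 <= 4 * lambda * K * F.
  apply: le_trans (_ : _ <= delta * (2 * minner M0 D)) _; first by rewrite ler_pM2l.
  have := ler_wpM2l lambda_ge0 support; lra.
have [->|F_gt0] := eqVneq F 0; first by rewrite !mulr_ge0 ?invr_ge0 ?sqrtr_ge0 // ltW.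
rewrite ler_pdivlMr // expr2 mulrA ler_pM2r ?lt_def ?F_gt0 //.
by rewrite mulrC.
Qed.

Section Compactness.
Variable R : realType.
Local Open Scope classical_set_scope.

Lemma continuous_sumr (T : topologicalType) (I : finType) (F : I -> T -> R) :
  (forall i, continuous (F i)) -> continuous (fun x => \sum_i F i x).
Proof. by move=> F_cont; apply: continuous_big => //; exact: add_continuous. Qed.

Lemma continuous_sqr (T : topologicalType) (f : T -> R) :
  continuous f -> continuous (fun x => f x ^+ 2).
Proof. by move=> f_cont x; rewrite /GRing.exp /=; apply: continuousM; exact: f_cont. Qed.

Lemma continuous_frob_sqr (T : topologicalType) m n (f : T -> 'M[R]_(m, n)) :
  (forall i j, continuous (fun x => f x i j)) -> continuous (fun x => frob (f x) ^+ 2).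
Proof.
move=> f_cont; have -> : (fun x => frob (f x) ^+ 2) = fun x => \sum_i \sum_j f x i j ^+ 2.
  by apply/funext => x; rewrite sqr_sqrtr // sumr_ge0 // => i _; exact: sumr_sqr_ge0.
by apply: continuous_sumr => i; apply: continuous_sumr => j; exact/continuous_sqr/f_cont.
Qed.

Lemma EVT_max_frob_ball q (f : 'rV[R]_q -> R) : continuous f ->
  exists2 c : 'rV[R]_q, frob c <= 1 & forall r, frob r <= 1 -> f r <= f c.
Proof.
move=> f_cont; pose B := [set r : 'rV[R]_q | frob r ^+ 2 <= 1].
have frob_le1 (r : 'rV[R]_q) : (frob r <= 1) = (frob r ^+ 2 <= 1).
  by rewrite -{2}(expr1n _ 2) ler_pXn2r ?nnegrE ?frob_ge0.
have B_closed : closed B.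
  have -> : B = (fun r : 'rV[R]_q => frob r ^+ 2) @^-1` [set x | x <= 1] by [].
  apply: preimage_closed; last exact: closed_le.
  by move=> r _; apply: (continuous_frob_sqr (f := id)); exact: coord_continuous.
have B_compact : compact B.
  pose box := [set r : 'rV[R]_q | forall j, `[(-1 : R), 1]%classic (r ord0 j)].
  have box_compact : compact box.
    exact: (@rV_compact R q (fun=> `[(-1 : R), 1]%classic) (fun=> @segment_compact R (-1) 1)).
  apply: subclosed_compact B_closed box_compact _ => r /= r_le1 j /=.
  rewrite in_itv /= -ler_norml -(expr_le1 (n := 2)) // real_normK ?num_real //.
  apply: le_trans r_le1; rewrite frob_sqr minnerE big_ord1 (bigD1 j) //= lerDl.
  by apply: sumr_ge0 => i _; exact: sqr_ge0.
have B0 : B !=set0 by exists 0; rewrite /B /= frob0 expr0n.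
have [c cB c_max] := EVT_max_rV B0 B_compact (continuous_subspaceT f_cont).
exists c => [|r r_le1]; first by rewrite frob_le1; move: cB; rewrite inE.
by apply: c_max; rewrite inE /B /= -frob_le1.
Qed.

End Compactness.

Section SingularValues.
Variable R : realType.
Implicit Types (m q : nat).

Lemma exists_frob_mulmx_max m q (A : 'M[R]_(m, q)) :
  exists2 y1 : 'cV[R]_q, frob y1 <= 1 &
    forall y : 'cV[R]_q, frob y <= 1 -> frob (A *m y) <= frob (A *m y1).
Proof.
have Ar_cont : continuous (fun r : 'rV[R]_q => frob (A *m r^T) ^+ 2).
  apply: continuous_frob_sqr => i j.
  under eq_fun do rewrite mxE; apply: continuous_sumr => k.
  under eq_fun do rewrite mxE.
  by move=> r; apply: continuousM; [exact: cst_continuous | exact: coord_continuous].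
have [c c_le1 c_max] := EVT_max_frob_ball Ar_cont.
exists c^T => [|y y_le1]; first by rewrite frob_tr.
have := c_max y^T; rewrite frob_tr trmxK => /(_ y_le1).
by rewrite ler_pXn2r ?nnegrE ?frob_ge0.
Qed.

Lemma frob_mulmx_le_of_ball m q (A : 'M[R]_(m, q)) s :
  (forall y : 'cV[R]_q, frob y <= 1 -> frob (A *m y) <= s) ->
  forall z : 'cV[R]_q, frob (A *m z) <= s * frob z.
Proof.
move=> A_le z; have [z0|z_neq0] := eqVneq (frob z) 0.
  by rewrite z0 mulr0; apply: le_trans (frob_mulmx_le _ _) _; rewrite z0 mulr0.
have z_gt0 : 0 < frob z by rewrite lt_def z_neq0 frob_ge0.
have := A_le ((frob z)^-1 *: z).
rewrite -scalemxAr !frobZ ger0_norm ?invr_ge0 ?frob_ge0 // mulVf //.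
by move=> /(_ (lexx _)); rewrite ler_pdivrMl // mulrC.
Qed.

Lemma norm_maximizer_eigen m q (A : 'M[R]_(m, q)) (y1 : 'cV[R]_q) :
  frob y1 = 1 -> (forall z : 'cV[R]_q, frob (A *m z) <= frob (A *m y1) * frob z) ->
  A^T *m (A *m y1) = frob (A *m y1) ^+ 2 *: y1.
Proof.
set s := frob (A *m y1); set z := A^T *m (A *m y1) => y1_1 A_le.
(* |z| <= s^2 = <y1, z> with |y1| = 1 is the equality case of Cauchy-Schwarz. *)
have y1z : minner y1 z = s ^+ 2 by rewrite /z -minner_mulmxl frob_sqr.
have z_le : frob z <= s ^+ 2.
  have : frob z ^+ 2 <= s ^+ 2 * frob z.
    rewrite frob_sqr {1}/z minner_mulmxl trmxK.
    apply: le_trans (minner_le_frob _ _) _.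
    by rewrite expr2 -mulrA ler_wpM2l ?frob_ge0.
  have := frob_ge0 z; nra.
have : frob (z - s ^+ 2 *: y1) ^+ 2 <= 0.
  rewrite frob_sqr !minnerBl !minnerBr !minnerZl !minnerZr (minnerC z y1) y1z.
  rewrite -!frob_sqr y1_1; have := frob_ge0 z; nra.
move=> sqr_le0; have : frob (z - s ^+ 2 *: y1) ^+ 2 == 0 by rewrite eq_le sqr_le0 sqr_ge0.
by rewrite sqrf_eq0 => /eqP/frob_eq0/eqP; rewrite subr_eq0 => /eqP.
Qed.

Lemma exists_singular_triple_ge m q (A : 'M[R]_(m, q)) (y0 : 'cV[R]_q) :
  frob y0 = 1 -> 0 < frob (A *m y0) ->
  exists s x y, singular_triple A s x y /\ frob (A *m y0) <= s.
Proof.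
move=> y0_1 Ay0_gt0; have [y1 y1_le1 y1_max] := exists_frob_mulmx_max A.
set s := frob (A *m y1).
have Ay0_le : frob (A *m y0) <= s by apply: y1_max; rewrite y0_1.
have s_gt0 : 0 < s := lt_le_trans Ay0_gt0 Ay0_le.
have A_le := frob_mulmx_le_of_ball y1_max.
have y1_1 : frob y1 = 1.
  apply/eqP; rewrite eq_le y1_le1 /=.
  by have := A_le y1; rewrite -[X in X <= _ -> _]mulr1 ler_pM2l.
have eigen := norm_maximizer_eigen y1_1 A_le.
exists s, (s^-1 *: (A *m y1)), y1; split => //; split; rewrite ?vnorm_frob //.
- exact: ltW.
- by rewrite frobZ ger0_norm ?invr_ge0 ?ltW // mulVf ?gt_eqF.
- by rewrite scalerA divff ?gt_eqF // scale1r.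
- by rewrite -scalemxAr eigen scalerA expr2 mulKf ?gt_eqF.
Qed.

Lemma minner_mulmx_le_leading m q (A : 'M[R]_(m, q)) s x y (v : 'cV[R]_m) (u : 'cV[R]_q) :
  singular_triple A s x y -> (forall s' x' y', singular_triple A s' x' y' -> s' <= s) ->
  frob v = 1 -> frob u = 1 -> minner v (A *m u) <= s.
Proof.
move=> [s_ge0 _ _ _ _] s_max v_1 u_1.
have [vAu_le0|vAu_gt0] := lerP (minner v (A *m u)) 0; first exact: le_trans s_ge0.
have vAu_le : minner v (A *m u) <= frob (A *m u).
  by have := minner_le_frob v (A *m u); rewrite v_1 mul1r.
have [s1 [x1 [y1 [triple1 Au_le]]]] := exists_singular_triple_ge u_1 (lt_le_trans vAu_gt0 vAu_le).
exact: le_trans vAu_le (le_trans Au_le (s_max _ _ _ triple1)).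
Qed.

Lemma sin_angle_ge0 m (a b : 'cV[R]_m) : 0 <= sin_angle a b.
Proof. exact: sqrtr_ge0. Qed.

Lemma sin_angle_le1 m (a b : 'cV[R]_m) : sin_angle a b <= 1.
Proof. by rewrite -sqrtr1 ler_sqrt // lerBlDr lerDl sqr_ge0. Qed.

Lemma sin_angle_le_frob m (x xh : 'cV[R]_m) (a s : R) :
  frob x = 1 -> frob xh = 1 -> 0 <= s ->
  s * sin_angle x xh <= frob (a *: x - s *: xh).
Proof.
move=> x_1 xh_1 s_ge0; rewrite sin_angleE -{1}(ger0_norm s_ge0) -sqrtr_sqr -sqrtrM ?sqr_ge0 //.
rewrite -(ger0_norm (frob_ge0 (a *: x - s *: xh))) -sqrtr_sqr ler_sqrt ?sqr_ge0 //.
rewrite frob_sqr !minnerBl !minnerBr !minnerZl !minnerZr (minnerC xh x).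
rewrite -!frob_sqr x_1 xh_1.
have := sqr_ge0 (a - s * minner x xh); nra.
Qed.

Lemma sin_angle_leading_le p q (v : 'cV[R]_p) (u : 'cV[R]_q) (Mh : 'M[R]_(p, q)) vh uh B :
  vnorm v = 1 -> vnorm u = 1 -> frob (v *m u^T - Mh) <= B ->
  leading_singular_vectors Mh vh uh ->
  Num.max (sin_angle v vh) (sin_angle u uh) <= 2 * B.
Proof.
move=> v_1 u_1 D_le [s [triple s_max]]; have [s_ge0 vh_1 uh_1 Muh MTvh] := triple.
rewrite !vnorm_frob in v_1 u_1 vh_1 uh_1.
have [B_large|B_small] := lerP 1 (2 * B).
  by rewrite ge_max !(le_trans (sin_angle_le1 _ _) B_large).
set D := v *m u^T - Mh; set F := frob D.
have Mh_def : Mh = v *m u^T - D by rewrite /D opprB addrC subrK.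
have s_ge : 1 - F <= s.
  apply: le_trans (minner_mulmx_le_leading triple s_max v_1 u_1).
  rewrite Mh_def mulmxBl minnerBr rank1_mulmx minnerZr -!frob_sqr u_1 v_1 expr1n mulr1.
  rewrite lerD2l lerN2; apply: le_trans (minner_le_frob _ _) _.
  by rewrite v_1 mul1r; apply: le_trans (frob_mulmx_le _ _) _; rewrite u_1 mulr1.
have sin_le m (x xh : 'cV[R]_m) a W : frob x = 1 -> frob xh = 1 ->
    W = a *: x - s *: xh -> frob W <= F -> sin_angle x xh <= 2 * B.
  move=> x_1 xh_1 W_def W_le; have := sin_angle_le_frob a x_1 xh_1 s_ge0.
  have F_le : F <= B := D_le.
  have : 0 <= (2 * s - 1) * sin_angle x xh by rewrite mulr_ge0 ?sin_angle_ge0 //; lra.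
  rewrite -W_def; lra.
rewrite ge_max; apply/andP; split.
- apply: (sin_le _ _ _ (minner u uh) (D *m uh)) => //.
    by rewrite mulmxBl rank1_mulmx Muh.
  by apply: le_trans (frob_mulmx_le _ _) _; rewrite uh_1 mulr1.
- apply: (sin_le _ _ _ (minner v vh) (D^T *m vh)) => //.
    by rewrite linearB mulmxBl trmx_rank1_mulmx MTvh.
  by apply: le_trans (frob_mulmx_le _ _) _; rewrite vh_1 mulr1 frob_tr.
Qed.
End SingularValues.

Unset Implicit Arguments.

Theorem mainTheorem8 (R : realType) (p n G k : nat) (J : 'I_G -> {set 'I_p})
  (C1 delta lambda : R) (v : 'cV[R]_p) (u : 'cV[R]_(n - 1))
  (T Mhat : 'M[R]_(p, n - 1)) (vhat : 'cV[R]_p) (uhat : 'cV[R]_(n - 1)) :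
  (forall j : 'I_p, exists g : 'I_G, j \in J g) ->
  0 < C1 ->
  (forall j : 'I_p, (#|[set g : 'I_G | j \in J g]|%:R : R) <= C1) ->
  0 < delta ->
  vnorm v = 1 -> vnorm u = 1 ->
  (\sum_(g < G | [exists j in J g, v j ord0 != 0%R]) #|J g| <= k)%N ->
  0 < lambda ->
  grpdual J (T - delta *: (v *m u^T)) <= lambda ->
  frob Mhat <= 1 ->
  (forall M : 'M[R]_(p, n - 1), frob M <= 1 ->
     minner T M - lambda * grpnorm J M <= minner T Mhat - lambda * grpnorm J Mhat) ->
  frob (v *m u^T - Mhat) <= 4 * lambda * Num.sqrt (C1 * n%:R * k%:R) / delta /\
  (leading_singular_vectors Mhat vhat uhat ->
   Num.max (sin_angle v vhat) (sin_angle u uhat)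
     <= 8 * lambda * Num.sqrt (C1 * n%:R * k%:R) / delta).
Proof.
move=> cover C1_gt0 mult_le delta_gt0 v_1 u_1 size_le lambda_gt0 dual_le Mhat_le1 Mhat_opt.
have M0_1 : frob (v *m u^T) = 1 by rewrite frob_rank1 -!vnorm_frob v_1 u_1 mulr1.
have M0_le1 : frob (v *m u^T) <= 1 by rewrite M0_1.
have M0_supp g : ~~ [exists j in J g, v j ord0 != 0] ->
    forall j t, j \in J g -> (v *m u^T) j t = 0.
  by move=> /exists_inPn v0 j t jg; rewrite rank1E (eqP (negPn (v0 j jg))) mul0r.
have frob_le := frob_sub_le_of_objective_le cover (ltW C1_gt0) mult_le size_le M0_supp
  delta_gt0 dual_le M0_1 Mhat_le1 (Mhat_opt _ M0_le1).
have K_le : Num.sqrt (C1 * (n - 1)%:R * k%:R) <= Num.sqrt (C1 * n%:R * k%:R).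
  apply: ler_wsqrtr; apply: ler_wpM2r; first exact: ler0n.
  by apply: ler_wpM2l; [exact: ltW | rewrite ler_nat leq_subr].
have bound : frob (v *m u^T - Mhat) <= 4 * lambda * Num.sqrt (C1 * n%:R * k%:R) / delta.
  apply: le_trans frob_le _; apply: ler_wpM2r; first by rewrite invr_ge0 ltW.
  by apply: ler_wpM2l => //; rewrite mulr_ge0 // ltW.
split=> // leading; apply: le_trans (sin_angle_leading_le v_1 u_1 bound leading) _.
by rewrite !mulrA -natrM.
Qed.
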